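(* Assume $|C|<m$ and $A\not\subseteq B$, and let $\mathcal S_1=\{(w_1+uw_2,w_3)\in\mathcal R^m: w_1\in\Delta_A,\ w_2\in\Delta_B,\ w_3\in\Delta_C^c\}$. Then $\Phi(\mathscr C_{\mathcal S_1})$ is a $4$-weight linear code over $\mathbb F_q$ with parameters $\big[2q^{|A|+|B|}(q^m-q^{|C|}),\ m+|A|+|A\cup B|,\ (q-1)q^{|A|+|B|-1}(q^m-q^{|C|})\big]$ whose nonzero Hamming weights and frequencies are: $(q-1)q^{|A|+|B|-1}(q^m-q^{|C|})$ with frequency $2(q^{|A\cup B|-|B|}-1)$; $2(q-1)q^{|A|+|B|-1}(q^m-q^{|C|})$ with frequency $q^{m+|A|+|A\cup B|}-2q^{m-|C|+|A\cup B|-|B|}+q^{m-|C|}$; $(q-1)q^{|A|+|B|-1}(2q^m-q^{|C|})$ with frequency $2(q^{|A\cup B|-|B|}-1)(q^{m-|C|}-1)$; $2(q-1)q^{m+|A|+|B|-1}$ with frequency $q^{m-|C|}-1$. Moreover, if $q=2$ or $q=3$, then $\Phi(\mathscr C_{\mathcal S_1})$ is self-orthogonal with respect to the Euclidean inner product on $\mathbb F_q^{n}$.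
   Context: Let $q$ be a prime power, $\mathbb F_q$ the field of order $q$, $m\ge 2$ an integer and $[m]=\{1,\dots,m\}$. For $v\in\mathbb F_q^m$, $\mathrm{supp}(v)=\{i:v_i\ne0\}$ and $wt_H$ is Hamming weight. For nonempty $P\subseteq[m]$, $\Delta_P=\{v\in\mathbb F_q^m:\mathrm{supp}(v)\subseteq P\}$, $\Delta_P^c=\mathbb F_q^m\setminus\Delta_P$. $A,B,C$ denote nonempty subsets of $[m]$. Let $R=\mathbb F_q[u]/\langle u^2\rangle$ and $\mathcal R=R\times\mathbb F_q$; each element of $\mathcal R^m$ is uniquely $(d+ue,f)$ with $d,e,f\in\mathbb F_q^m$. Define $\langle(d_1+ue_1,f_1),(d_2+ue_2,f_2)\rangle=(d_1+ue_1)\cdot(d_2+ue_2)+u\,f_1\cdot f_2\in R$, where $x\cdot y=\sum_i x_iy_i$. For a nonempty $\mathcal D\subseteq\mathcal R^m$ listed in a fixed order, $\mathscr C_{\mathcal D}=\{(\langle r,s\rangle)_{s\in\mathcal D}: r\in\mathcal R^m\}\subseteq R^{|\mathcal D|}$. The Gray map $\Phi:R^n\to\mathbb F_q^{2n}$ is $\Phi(d+ue)=(e,d+e)$ for $d,e\in\mathbb F_q^n$, applied to a code elementwise. An $[n,k,d]$ code is a linear code of length $n$, dimension $k$, minimum Hamming distance $d$; a code $\mathcal C$ is self-orthogonal if $\mathcal C\subseteq\mathcal C^\perp$. *)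

From HB Require Import structures.
From mathcomp Require Import all_boot all_order all_algebra all_field.
Set Implicit Arguments. Unset Strict Implicit. Unset Printing Implicit Defensive.
Import GRing.Theory.
Local Open Scope ring_scope.

Definition supp (F : finFieldType) (m : nat) (v : 'rV[F]_m) : {set 'I_m} :=
  [set i | v 0 i != 0].

Definition Delta (F : finFieldType) (m : nat) (P : {set 'I_m}) : {set 'rV[F]_m} :=
  [set v | supp v \subset P].
Arguments Delta F {m} P.

Definition Deltac (F : finFieldType) (m : nat) (P : {set 'I_m}) : {set 'rV[F]_m} :=
  ~: Delta F P.

(* An element of R = F[u]/<u^2> is a pair (x, y) standing for x + u y.
   An element (d + u e, f) of (R x F)^m is the triple ((d, e), f). *)
Arguments Deltac F {m} P.

Definition Rmul (F : finFieldType) (x y : F * F) : F * F :=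
  (x.1 * y.1, x.1 * y.2 + x.2 * y.1).
Definition Radd (F : finFieldType) (x y : F * F) : F * F := (x.1 + y.1, x.2 + y.2).

Definition RMtype (F : finFieldType) (m : nat) : finType :=
  ('rV[F]_m * 'rV[F]_m * 'rV[F]_m)%type.

Definition dotF (F : finFieldType) (m : nat) (x y : 'rV[F]_m) : F :=
  \sum_(i < m) x 0 i * y 0 i.

(* <(d1+ue1,f1),(d2+ue2,f2)> = (d1+ue1).(d2+ue2) + u f1.f2  in R *)
Definition innerR (F : finFieldType) (m : nat) (r s : RMtype F m) : F * F :=
  Radd (\big[@Radd F/(0, 0)]_(i < m)
          Rmul (r.1.1 0 i, r.1.2 0 i) (s.1.1 0 i, s.1.2 0 i))
       (0, dotF r.2 s.2).

Definition codeword (F : finFieldType) (m : nat) (D : {set RMtype F m})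
  (r : RMtype F m) : 'I_#|D| -> F * F :=
  fun j => innerR r (enum_val j).

(* Gray map Phi(d + u e) = (e, d + e) *)
Definition gray (F : finFieldType) (n : nat) (x : 'I_n -> F * F) : 'rV[F]_(n + n) :=
  row_mx (\row_j (x j).2) (\row_j ((x j).1 + (x j).2)).

Arguments codeword {F m} D r j.

Definition grayCode (F : finFieldType) (m : nat) (D : {set RMtype F m})
  : {set 'rV[F]_(#|D| + #|D|)} :=
  [set gray (codeword D r) | r : RMtype F m].

Definition wtH (F : finFieldType) (n : nat) (x : 'rV[F]_n) : nat :=
  #|[set i | x 0 i != 0]|.

Definition S1 (F : finFieldType) (m : nat) (A B C : {set 'I_m}) : {set RMtype F m} :=
  [set s : RMtype F m | [&& s.1.1 \in Delta F A, s.1.2 \in Delta F B &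
                            s.2 \in Deltac F C]].

Definition is_linear_code (F : finFieldType) (n : nat) (Cd : {set 'rV[F]_n}) : Prop :=
  0 \in Cd /\ forall (a : F) x y, x \in Cd -> y \in Cd -> a *: x + y \in Cd.

Definition code_dim (F : finFieldType) (n : nat) (Cd : {set 'rV[F]_n}) : nat :=
  \dim <<enum Cd>>%VS.

Definition min_dist_is (F : finFieldType) (n : nat) (Cd : {set 'rV[F]_n}) (d : nat) : Prop :=
  (exists2 x, x \in Cd & exists2 y, y \in Cd & x != y /\ wtH (x - y) = d) /\
  (forall x y, x \in Cd -> y \in Cd -> x != y -> (d <= wtH (x - y))%N).

Definition freq (F : finFieldType) (n : nat) (Cd : {set 'rV[F]_n}) (w : nat) : nat :=
  #|[set c in Cd | wtH c == w]|.

Definition nz_weights (F : finFieldType) (n : nat) (Cd : {set 'rV[F]_n}) : seq nat :=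
  undup [seq wtH c | c <- enum Cd & c != 0].

Definition self_orthogonal (F : finFieldType) (n : nat) (Cd : {set 'rV[F]_n}) : Prop :=
  forall x y, x \in Cd -> y \in Cd -> dotF x y = 0.

From HB Require Import structures.
From mathcomp Require Import all_boot all_order all_algebra all_field.
From mathcomp Require Import ring zify.
Import GRing.Theory.
Local Open Scope ring_scope.
Set Implicit Arguments. Unset Strict Implicit. Unset Printing Implicit Defensive.

(* Write r = (d + u e, f) and s = (s1 + u s2, s3) in S1.  Then <r, s> = d.s1 + u (e.s1 + d.s2 + f.s3),
   so the two halves of the Gray image of the codeword of r count the s in S1 on which the linear
   forms e.s1 + d.s2 + f.s3 and (d + e).s1 + d.s2 + f.s3 do not vanish.  A form x.s1 + y.s2 + f.s3 is
   equidistributed on S1, hence nonzero on a fraction (q - 1)/q of it, unless x vanishes on A and y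
   on B; then only f matters and the count is 0, (q - 1) q^(m+a+b-1) or (q - 1) q^(a+b-1) (q^m - q^c)
   according as f = 0, f is nonzero and supported off C, or neither.  The frequencies are counts of
   the r of each type divided by the size q^(m-|A∪B|) q^(m-|A|) of the kernel of r |-> Φ(codeword r).
   For self-orthogonality, the Gray inner product of two codewords is a sum over Δ_A × Δ_B × Δ_C^c
   of products of two such forms; every monomial is constant along one of the three factors, whose
   cardinality is divisible by the characteristic. *)

Section Support.
Variables (F : finFieldType) (m : nat).
Implicit Types (P Q : {set 'I_m}) (v w : 'rV[F]_m).

Lemma DeltaP P v : reflect (forall i, i \notin P -> v 0 i = 0) (v \in Delta F P).
Proof.
rewrite inE /supp; apply: (iffP subsetP) => [sub i iNP | v0 i].
  by apply/eqP; apply: contraNT iNP => nz; apply: sub; rewrite inE.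
by rewrite inE; apply: contraR => /v0 ->.
Qed.

Lemma Delta0 P : 0 \in Delta F P.
Proof. by apply/DeltaP => i _; rewrite mxE. Qed.

Lemma DeltaD P v w : v \in Delta F P -> w \in Delta F P -> v + w \in Delta F P.
Proof. by move=> /DeltaP v0 /DeltaP w0; apply/DeltaP => i iNP; rewrite mxE v0 ?w0 ?addr0. Qed.

Lemma DeltaZ P (a : F) v : v \in Delta F P -> a *: v \in Delta F P.
Proof. by move=> /DeltaP v0; apply/DeltaP => i iNP; rewrite mxE v0 ?mulr0. Qed.

Lemma DeltaN P v : (- v \in Delta F P) = (v \in Delta F P).
Proof. by apply/idP/idP => /(DeltaZ (-1)); rewrite scaleN1r ?opprK. Qed.

Lemma DeltaDr P v w : w \in Delta F P -> (v + w \in Delta F P) = (v \in Delta F P).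
Proof.
move=> wP; apply/idP/idP => [vwP | vP]; last exact: DeltaD.
by rewrite -(addrK w v); apply: DeltaD; rewrite ?DeltaN.
Qed.

Lemma Delta_delta P i : (delta_mx 0 i \in Delta F P) = (i \in P).
Proof.
apply/DeltaP/idP => [di0 | iP j]; last first.
  by rewrite mxE eqxx /=; case: (j =P i) => [->|_] //; rewrite iP.
by apply: contraT => /di0 /eqP; rewrite mxE !eqxx oner_eq0.
Qed.

Lemma DeltaI P Q v : (v \in Delta F (P :&: Q)) = (v \in Delta F P) && (v \in Delta F Q).
Proof.
apply/DeltaP/andP => [v0 | [/DeltaP v0P /DeltaP v0Q] i].
  by split; apply/DeltaP => i iN; apply: v0; rewrite inE negb_and iN ?orbT.
by rewrite inE negb_and => /orP[/v0P | /v0Q].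
Qed.

Lemma Delta_set0 v : (v \in Delta F set0) = (v == 0).
Proof.
apply/DeltaP/eqP => [v0 | -> i _]; last by rewrite mxE.
by apply/rowP => i; rewrite mxE v0 ?inE.
Qed.

Lemma card_Delta P : #|Delta F P| = (#|F| ^ #|P|)%N.
Proof.
have row_inj : injective (fun f : {ffun 'I_m -> F} => \row_i f i).
  by move=> f g /rowP fg; apply/ffunP => i; have := fg i; rewrite !mxE.
have -> : #|F| = #|@predT F| by apply: eq_card.
rewrite -(card_pffun_on 0 P predT) -(card_imset _ row_inj).
apply: eq_card => v; apply/DeltaP/imsetP => [v0 | [f /pffun_onP[supp_f _] -> i iNP]].
  exists [ffun i => v 0 i]; last by apply/rowP => i; rewrite !mxE ffunE.
  apply/pffun_onP; split=> [|y _] //; apply/subsetP => i; rewrite inE ffunE.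
  by apply: contraNT => /v0 ->.
by rewrite mxE; apply/eqP; apply: contraNT iNP => fi; apply: (subsetP supp_f); rewrite inE.
Qed.

Lemma card_Delta_compl P : #|Delta F (~: P)| = (#|F| ^ (m - #|P|))%N.
Proof. by rewrite card_Delta cardsCs setCK card_ord. Qed.

Lemma card_Deltac P : #|Deltac F P| = (#|F| ^ m - #|F| ^ #|P|)%N.
Proof. by rewrite /Deltac cardsCs setCK card_Delta card_mx mul1n. Qed.

End Support.

Lemma card_setI_sum (T : finType) (X : {set T}) (p : pred T) :
  #|[set x in X | p x]| = (\sum_(x in X) p x)%N.
Proof.
rewrite -sum1_card (eq_bigl (fun x => (x \in X) && p x)) ?big_mkcondr => [|x]; last by rewrite inE.
by apply: eq_bigr => x _; case: (p x).
Qed.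

Lemma card_set_sum (T : finType) (p : pred T) : #|[set x | p x]| = (\sum_x p x)%N.
Proof.
rewrite -sum1_card (eq_bigl p) ?big_mkcond /= => [|x]; last by rewrite inE.
by apply: eq_bigr => x _; case: (p x).
Qed.

Lemma card_setX_suml (T1 T2 : finType) (X : {set T1}) (Z : {set T2}) (p : T1 -> T2 -> bool) :
  #|[set s in setX X Z | p s.1 s.2]| = (\sum_(x in X) #|[set z in Z | p x z]|)%N.
Proof.
rewrite card_setI_sum; under [RHS]eq_bigr do rewrite card_setI_sum.
by rewrite pair_big_dep /=; apply: eq_bigl => -[x z]; rewrite in_setX.
Qed.

Lemma card_setX_sumr (T1 T2 : finType) (X : {set T1}) (Z : {set T2}) (p : T1 -> T2 -> bool) :
  #|[set s in setX X Z | p s.1 s.2]| = (\sum_(z in Z) #|[set x in X | p x z]|)%N.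
Proof.
rewrite card_setI_sum; under [RHS]eq_bigr do rewrite card_setI_sum.
by rewrite exchange_big pair_big_dep /=; apply: eq_bigl => -[x z]; rewrite in_setX.
Qed.

Section Equidistribution.
Variable F : finFieldType.
Local Notation q := #|F|.

Definition equidistributed (T : finType) (X : {set T}) (g : T -> F) :=
  forall t, (q * #|[set x in X | g x == t]|)%N = #|X|.

Lemma equid_level0 (T : finType) (X : {set T}) (g : T -> F) :
  (forall t, #|[set x in X | g x == t]| = #|[set x in X | g x == 0]|) ->
  equidistributed X g.
Proof.
move=> level_eq t; rewrite level_eq.
have -> : #|X| = (\sum_(s : F) #|[set x in X | g x == s]|)%N.
  under eq_bigr do rewrite card_setI_sum.
  rewrite exchange_big /= -sum1_card; apply: eq_bigr => x _.
  by rewrite (bigD1 (g x)) //= eqxx big1 // => s; rewrite eq_sym => /negbTE ->.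
by rewrite (eq_bigr _ (fun s _ => level_eq s)) sum_nat_const cardT -cardE.
Qed.

Lemma equid_card_nz (T : finType) (X : {set T}) (g : T -> F) : equidistributed X g ->
  (q * #|[set x in X | g x != 0%R]| = (q - 1) * #|X|)%N.
Proof.
move=> eqd; have card_split : #|X| = (#|[set x in X | g x == 0%R]| + #|[set x in X | g x != 0%R]|)%N.
  by rewrite !card_setI_sum -big_split -sum1_card; apply: eq_bigr => x _; case: eqP.
by rewrite mulnBl mul1n -{2}(eqd 0) {1}card_split mulnDr addKn.
Qed.

Lemma equid_setXl (T1 T2 : finType) (X : {set T1}) (Z : {set T2}) (g : T1 -> F) (h : T2 -> F) :
  equidistributed X g -> equidistributed (setX X Z) (fun s => g s.1 + h s.2).
Proof.
move=> eqd t; rewrite (card_setX_sumr X Z (fun x z => g x + h z == t)) big_distrr /=.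
rewrite cardsX mulnC -sum_nat_const; apply: eq_bigr => z _; rewrite -(eqd (t - h z)).
by congr (_ * _)%N; apply: eq_card => x; rewrite !inE -[in RHS](inj_eq (addIr (h z))) subrK.
Qed.

Lemma equid_setXr (T1 T2 : finType) (X : {set T1}) (Z : {set T2}) (g : T1 -> F) (h : T2 -> F) :
  equidistributed Z h -> equidistributed (setX X Z) (fun s => g s.1 + h s.2).
Proof.
move=> eqd t; rewrite (card_setX_suml X Z (fun x z => g x + h z == t)) big_distrr /=.
rewrite cardsX -sum_nat_const; apply: eq_bigr => x _; rewrite -(eqd (t - g x)).
by congr (_ * _)%N; apply: eq_card => z; rewrite !inE -[in RHS](inj_eq (addIr (g x))) subrK addrC.
Qed.

Lemma card_setX_nz_addl0 (T1 T2 : finType) (X : {set T1}) (Z : {set T2}) (g : T1 -> F) (h : T2 -> F) :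
  {in X, forall x, g x = 0} ->
  #|[set s in setX X Z | g s.1 + h s.2 != 0%R]| = (#|X| * #|[set z in Z | h z != 0%R]|)%N.
Proof.
move=> g0; rewrite (card_setX_suml X Z (fun x z => g x + h z != 0)) -sum_nat_const.
by apply: eq_bigr => x xX; apply: eq_card => z; rewrite !inE g0 ?add0r.
Qed.

End Equidistribution.

Section DotProduct.
Variables (F : finFieldType) (m : nat).
Local Notation q := #|F|.
Implicit Types (P : {set 'I_m}) (u v w : 'rV[F]_m).

Lemma dotFDl u v w : dotF (u + v) w = dotF u w + dotF v w.
Proof. by rewrite /dotF -big_split; apply: eq_bigr => i _; rewrite mxE mulrDl. Qed.

Lemma dotFDr u v w : dotF w (u + v) = dotF w u + dotF w v.
Proof. by rewrite /dotF -big_split; apply: eq_bigr => i _; rewrite mxE mulrDr. Qed.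

Lemma dotFZr (a : F) v w : dotF w (a *: v) = a * dotF w v.
Proof. by rewrite /dotF mulr_sumr; apply: eq_bigr => i _; rewrite mxE mulrCA. Qed.

Lemma dotFZl (a : F) v w : dotF (a *: v) w = a * dotF v w.
Proof. by rewrite /dotF mulr_sumr; apply: eq_bigr => i _; rewrite mxE mulrA. Qed.

Lemma dot0F w : dotF 0 w = 0.
Proof. by rewrite /dotF big1 // => i _; rewrite mxE mul0r. Qed.

Lemma dotF_delta v i : dotF v (delta_mx 0 i) = v 0 i.
Proof.
rewrite /dotF (bigD1 i) //= big1 ?addr0 => [|j /negbTE ji]; first by rewrite mxE !eqxx mulr1.
by rewrite mxE ji andbF mulr0.
Qed.

Lemma dotF_Delta_compl P v w : v \in Delta F (~: P) -> w \in Delta F P -> dotF v w = 0.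
Proof.
move=> /DeltaP v0 /DeltaP w0; rewrite /dotF big1 // => i _.
by case: (boolP (i \in P)) => iP; [rewrite v0 ?mul0r // inE negbK | rewrite w0 ?mulr0].
Qed.

Lemma dotFNr v w : dotF w (- v) = - dotF w v.
Proof. by rewrite -scaleN1r dotFZr mulN1r. Qed.

Lemma equid_dotF P v : v \notin Delta F (~: P) -> equidistributed (Delta F P) (dotF v).
Proof.
move=> vN; have [i iP vi0] : exists2 i, i \in P & v 0 i != 0.
  apply/exists_inP; apply: contraNT vN => /exists_inPn v0.
  by apply/DeltaP => i; rewrite inE negbK => /v0; rewrite negbK => /eqP.
apply: equid_level0 => t; pose d : 'rV[F]_m := (t / v 0 i) *: delta_mx 0 i.
have dP : d \in Delta F P by rewrite DeltaZ // Delta_delta.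
have vd : dotF v d = t by rewrite dotFZr dotF_delta divfK.
have levelE s x : (x \in [set y in Delta F P | dotF v y == s]) = (x \in Delta F P) && (dotF v x == s).
  by rewrite !inE.
rewrite -(card_imset _ (addIr (- d))); apply: eq_card => w; rewrite levelE.
apply/imsetP/andP => [[x /[!levelE] /andP[xP /eqP vx] ->] | [wP /eqP vw]].
  by rewrite DeltaDr ?DeltaN // dotFDr dotFNr vx vd subrr.
by exists (w + d); rewrite ?addrK // levelE DeltaD // dotFDr vw vd add0r /=.
Qed.

Lemma card_dotF_nz P v : v \notin Delta F (~: P) ->
  (q * #|[set w in Delta F P | dotF v w != 0%R]| = (q - 1) * q ^ #|P|)%N.
Proof. by move=> vN; rewrite (equid_card_nz (equid_dotF vN)) card_Delta. Qed.

Lemma card_dotF_nz0 P v : v \in Delta F (~: P) ->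
  #|[set w in Delta F P | dotF v w != 0%R]| = 0%N.
Proof. by move=> vP; rewrite card_setI_sum big1 // => w wP; rewrite (dotF_Delta_compl vP wP) eqxx. Qed.

Lemma card_Deltac_dotF_nz P v : v != 0 ->
  (q * #|[set w in Deltac F P | dotF v w != 0%R]| =
   (q - 1) * q ^ m - (if v \in Delta F (~: P) then 0 else (q - 1) * q ^ #|P|))%N.
Proof.
move=> v0; have -> : [set w in Deltac F P | dotF v w != 0%R] =
    [set w in Delta F setT | dotF v w != 0%R] :\: [set w in Delta F P | dotF v w != 0%R].
  by apply/setP => w; rewrite !inE subsetT; case: (_ \subset P); case: (_ != 0).
rewrite cardsDS; last by apply/subsetP => w; rewrite !inE subsetT => /andP[].
rewrite mulnBr card_dotF_nz ?setCT ?Delta_set0 // cardsT card_ord.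
by case: ifP => vP; [rewrite card_dotF_nz0 ?muln0 | rewrite card_dotF_nz ?vP].
Qed.

End DotProduct.

Lemma card_preim_const_fibers (T V : finType) (f : T -> V) (k : nat) (p : pred V) :
  (forall x, #|[set y | f y == f x]| = k) ->
  #|[set x | p (f x)]| = (#|[set v in [set f x | x : T] | p v]| * k)%N.
Proof.
move=> fibers; rewrite -sum1_card (partition_big_imset f) /=.
have -> : f @: [set x | p (f x)] = [set v in [set f x | x : T] | p v].
  apply/setP => v; rewrite inE; apply/imsetP/andP => [[x /[!inE] px ->] | [/imsetP[x _ ->] px]].
    by split; first exact: imset_f.
  by exists x; rewrite ?inE.
rewrite -sum_nat_const; apply: eq_bigr => v /[!inE] /andP[/imsetP[x _ ->] px].
rewrite -(fibers x) sum1_card; apply: eq_card => y; rewrite unfold_in !inE.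
by case: eqP => [->|]; rewrite ?px ?andbF.
Qed.

Section Codes.
Variable F : finFieldType.

Lemma wtH_eq0 n (x : 'rV[F]_n) : (wtH x == 0%N) = (x == 0).
Proof.
rewrite /wtH cards_eq0; apply/eqP/eqP => [x0 | ->]; last by apply/setP => i; rewrite !inE mxE eqxx.
apply/rowP => i; rewrite mxE; apply/eqP; apply: contraT => xi.
by have := in_set0 i; rewrite -x0 inE xi.
Qed.

Lemma wtH_gray n (x : 'I_n -> F * F) :
  wtH (gray x) = (\sum_j (((x j).2 != 0%R) + (((x j).1 + (x j).2)%R != 0%R)))%N.
Proof.
rewrite /wtH /gray card_set_sum big_split_ord big_split /=.
by congr (_ + _)%N; apply: eq_bigr => j _; rewrite ?row_mxEl ?row_mxEr mxE.
Qed.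

Lemma dotF_gray n (x y : 'I_n -> F * F) : dotF (gray x) (gray y) =
  \sum_j ((x j).2 * (y j).2 + ((x j).1 + (x j).2) * ((y j).1 + (y j).2)).
Proof.
rewrite /dotF /gray big_split_ord big_split /=.
by congr (_ + _); apply: eq_bigr => j _; rewrite ?row_mxEl ?row_mxEr !mxE.
Qed.

Lemma span_linear_code n (Cd : {set 'rV[F]_n}) : is_linear_code Cd ->
  forall v, (v \in <<enum Cd>>%VS) = (v \in Cd).
Proof.
move=> [Cd0 CdL] v; apply/idP/idP => [|vC]; last by rewrite memv_span ?mem_enum.
move/coord_span => ->; elim/big_ind: _ => [//| x y xC yC | i _].
  by rewrite -[x]scale1r CdL.
by rewrite -[_ *: _]addr0 CdL // -(mem_enum (mem Cd)) mem_nth ?size_tuple.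
Qed.

Lemma card_linear_code n (Cd : {set 'rV[F]_n}) : is_linear_code Cd ->
  #|Cd| = (#|F| ^ code_dim Cd)%N.
Proof. by move=> CdL; rewrite -card_vspace; apply: eq_card => v; rewrite span_linear_code. Qed.

End Codes.

Lemma sum_setX (V : nmodType) (T1 T2 : finType) (X : {set T1}) (Z : {set T2}) (f : T1 * T2 -> V) :
  \sum_(s in setX X Z) f s = \sum_(x in X) \sum_(z in Z) f (x, z).
Proof. by rewrite pair_big_dep /=; apply: eq_big => [[x z]|[x z] _] //; rewrite in_setX. Qed.

Section SeparableSums.
Variables (R : comRingType) (T1 T2 T3 : finType).
Variables (X1 : {set T1}) (X2 : {set T2}) (X3 : {set T3}).
Hypotheses (X1_0 : #|X1|%:R = 0 :> R) (X2_0 : #|X2|%:R = 0 :> R) (X3_0 : #|X3|%:R = 0 :> R).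
Local Notation X := (setX (setX X1 X2) X3).

Lemma sum_setX3_indep3 (g : T1 -> T2 -> R) : \sum_(s in X) g s.1.1 s.1.2 = 0.
Proof. by rewrite sum_setX big1 // => p _; rewrite /= sumr_const -mulr_natr X3_0 mulr0. Qed.

Lemma sum_setX3_indep2 (g : T1 -> T3 -> R) : \sum_(s in X) g s.1.1 s.2 = 0.
Proof. by rewrite !sum_setX big1 // => x _; rewrite /= sumr_const -mulr_natr X2_0 mulr0. Qed.

Lemma sum_setX3_indep1 (g : T2 -> T3 -> R) : \sum_(s in X) g s.1.2 s.2 = 0.
Proof.
rewrite !sum_setX exchange_big big1 // => y _.
by rewrite /= sumr_const -mulr_natr X1_0 mulr0.
Qed.

(* Each monomial of the product misses one of the three coordinates. *)
Lemma sum_setX3_mul_separable (g1 h1 : T1 -> R) (g2 h2 : T2 -> R) (g3 h3 : T3 -> R) :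
  \sum_(s in X) (g1 s.1.1 + g2 s.1.2 + g3 s.2) * (h1 s.1.1 + h2 s.1.2 + h3 s.2) = 0.
Proof.
rewrite (eq_bigr (fun s => (g1 s.1.1 + g2 s.1.2) * (h1 s.1.1 + h2 s.1.2)
    + (g1 s.1.1 * h3 s.2 + g3 s.2 * h1 s.1.1)
    + (g2 s.1.2 * h3 s.2 + g3 s.2 * h2 s.1.2 + g3 s.2 * h3 s.2))) => [|s _]; last by ring.
rewrite 2!big_split (sum_setX3_indep3 (fun x y => (g1 x + g2 y) * (h1 x + h2 y))).
rewrite (sum_setX3_indep2 (fun x z => g1 x * h3 z + g3 z * h1 x)).
by rewrite (sum_setX3_indep1 (fun y z => g2 y * h3 z + g3 z * h2 y + g3 z * h3 z)) /= !addr0.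
Qed.

End SeparableSums.

Lemma natr_card_finField (F : finFieldType) : (#|F|%:R : F) = 0.
Proof.
have shift : \sum_(x : F) x = \sum_(x : F) (x + 1) by apply: (reindex_inj (addIr 1)).
move/eqP: shift; rewrite big_split /= sumr_const -subr_eq0 opprD addrA subrr add0r oppr_eq0.
by rewrite cardT -cardE => /eqP.
Qed.

Section GrayImage.
Variables (F : finFieldType) (m : nat) (A B C : {set 'I_m}).
Local Notation q := #|F|.
Local Notation a := #|A|.
Local Notation b := #|B|.
Local Notation c := #|C|.
Local Notation ab := #|A :|: B|.
Local Notation S := (S1 F A B C).
Local Notation Cd := (grayCode S).
Local Notation RM := ('rV[F]_m * 'rV[F]_m * 'rV[F]_m)%type.

Lemma S1E : S = setX (setX (Delta F A) (Delta F B)) (Deltac F C).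
Proof. by apply/setP => -[[d e] f]; rewrite !inE /= andbA. Qed.

Lemma card_S1 : #|S| = (q ^ a * q ^ b * (q ^ m - q ^ c))%N.
Proof. by rewrite S1E !cardsX !card_Delta card_Deltac. Qed.

Definition lform (u v f : 'rV[F]_m) (s : RM) := dotF u s.1.1 + dotF v s.1.2 + dotF f s.2.

Lemma innerR_E (r s : RM) : innerR r s = (dotF r.1.1 s.1.1, lform r.1.2 r.1.1 r.2 s).
Proof.
have fst_sum := big_morph fst (id2 := (0, 0)) (op2 := @Radd F) (fun _ _ => erefl) erefl.
have snd_sum := big_morph snd (id2 := (0, 0)) (op2 := @Radd F) (fun _ _ => erefl) erefl.
rewrite /innerR /Radd /= fst_sum snd_sum addr0 /lform /dotF -!big_split /=.
by congr pair; apply: eq_bigr => i _; ring.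
Qed.

Lemma innerR_sum (r s : RM) :
  (innerR r s).1 + (innerR r s).2 = lform (r.1.1 + r.1.2) r.1.1 r.2 s.
Proof. by rewrite innerR_E /lform dotFDl /= !addrA. Qed.

Definition grayCW (r : RM) : 'rV[F]_(#|S| + #|S|) := gray (codeword S r).

Fact grayCW_is_linear : linear grayCW.
Proof.
move=> k r r'; rewrite /grayCW /gray scale_row_mx add_row_mx; congr row_mx; apply/rowP => j;
  by rewrite !mxE /codeword !innerR_E /lform /= !dotFDl !dotFZl; ring.
Qed.

HB.instance Definition _ := GRing.isLinear.Build F RM _ _ grayCW grayCW_is_linear.

Lemma grayCodeP w : reflect (exists r, w = grayCW r) (w \in Cd).
Proof. by apply: (iffP imsetP) => [[r _ ->]|[r ->]]; exists r. Qed.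

Lemma grayCW_in r : grayCW r \in Cd.
Proof. by apply/grayCodeP; exists r. Qed.

Lemma grayCode_linear : is_linear_code Cd.
Proof.
split=> [|k _ _ /grayCodeP[r ->] /grayCodeP[r' ->]]; first by rewrite -(raddf0 grayCW) grayCW_in.
by rewrite -linearP grayCW_in.
Qed.

Definition nonzeros (u v f : 'rV[F]_m) := #|[set s in S | lform u v f s != 0]|.

Lemma wtH_grayCW r :
  wtH (grayCW r) = (nonzeros r.1.2 r.1.1 r.2 + nonzeros (r.1.1 + r.1.2) r.1.1 r.2)%N.
Proof.
rewrite /grayCW wtH_gray /codeword /nonzeros !card_setI_sum -big_split /=.
rewrite -(big_enum_val (A := mem S) (fun s =>
  ((innerR r s).2 != 0%R) + (((innerR r s).1 + (innerR r s).2)%R != 0%R)))%N.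
by apply: eq_bigr => s _; rewrite innerR_sum innerR_E.
Qed.

Lemma dotF_grayCW r r' : dotF (grayCW r) (grayCW r') = \sum_(s in S)
  (lform r.1.2 r.1.1 r.2 s * lform r'.1.2 r'.1.1 r'.2 s +
   lform (r.1.1 + r.1.2) r.1.1 r.2 s * lform (r'.1.1 + r'.1.2) r'.1.1 r'.2 s).
Proof.
rewrite /grayCW dotF_gray /codeword.
rewrite -(big_enum_val (A := mem S) (fun s => (innerR r s).2 * (innerR r' s).2 +
   ((innerR r s).1 + (innerR r s).2) * ((innerR r' s).1 + (innerR r' s).2))).
by apply: eq_bigr => s _; rewrite !innerR_sum !innerR_E.
Qed.

Hypotheses (An : A != set0) (Bn : B != set0) (Cn : C != set0) (Cm : (c < m)%N).

Lemma grayCode_self_orthogonal : self_orthogonal Cd.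
Proof.
move=> _ _ /grayCodeP[r ->] /grayCodeP[r' ->].
have pow0 k : (0 < k)%N -> ((q ^ k)%N%:R : F) = 0.
  by case: k => // k _; rewrite natrX natr_card_finField expr0n.
have A0 : (#|Delta F A|%:R : F) = 0 by rewrite card_Delta pow0 ?card_gt0.
have B0 : (#|Delta F B|%:R : F) = 0 by rewrite card_Delta pow0 ?card_gt0.
have C0 : (#|Deltac F C|%:R : F) = 0.
  have m_gt0 : (0 < m)%N by apply: leq_ltn_trans Cm.
  rewrite card_Deltac natrB; last by rewrite leq_exp2l ?finNzRing_gt1 // ltnW.
  by rewrite !pow0 ?subrr ?card_gt0.
by rewrite dotF_grayCW big_split S1E /lform /= !(sum_setX3_mul_separable A0 B0 C0) addr0.
Qed.

Definition w1 := ((q - 1) * q ^ (a + b - 1) * (q ^ m - q ^ c))%N.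
Definition hw4 := ((q - 1) * q ^ (m + a + b - 1))%N.

Lemma q_gt0 : (0 < q)%N. Proof. exact: ltnW (finNzRing_gt1 F). Qed.

Lemma powq_ab : (q ^ a * q ^ b = q * q ^ (a + b - 1))%N.
Proof. by rewrite -expnD -expnS; congr (_ ^ _)%N; have := card_gt0 A; rewrite An; lia. Qed.

Lemma w1_card_S1 : (q * w1 = (q - 1) * #|S|)%N.
Proof. by rewrite card_S1 powq_ab /w1; ring. Qed.

Lemma hw4E : (q * hw4 = (q - 1) * (q ^ a * q ^ b * q ^ m))%N.
Proof.
rewrite powq_ab /hw4 -mulnA -expnD (_ : (a + b - 1 + m = m + a + b - 1)%N); first by ring.
by have := card_gt0 A; rewrite An; lia.
Qed.

Lemma powq_lt : (q ^ c < q ^ m)%N.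
Proof. by rewrite ltn_exp2l ?finNzRing_gt1. Qed.

Lemma w1_gt0 : (0 < w1)%N.
Proof.
by rewrite /w1 !muln_gt0 expn_gt0 q_gt0 !subn_gt0 powq_lt finNzRing_gt1.
Qed.

Lemma w1_add_hw4 : ((q - 1) * q ^ (a + b - 1) * (2 * q ^ m - q ^ c) = w1 + hw4)%N.
Proof.
rewrite /w1 /hw4 (_ : (m + a + b - 1 = a + b - 1 + m)%N); last first.
  by have := card_gt0 A; rewrite An; lia.
rewrite expnD; have := ltnW powq_lt; move: (q ^ c)%N (q ^ m)%N => x y le_xy.
by rewrite (_ : (2 * y - x = y - x + y)%N); [ring | lia].
Qed.

Lemma w1_lt_hw4 : (w1 < hw4)%N.
Proof.
rewrite -(ltn_pmul2l q_gt0) w1_card_S1 hw4E card_S1 ltn_pmul2l ?subn_gt0 ?finNzRing_gt1 //.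
by rewrite ltn_pmul2l ?muln_gt0 ?expn_gt0 ?q_gt0 // ltn_subrL !expn_gt0 q_gt0.
Qed.

Lemma nonzeros_equid u v f : ~~ ((u \in Delta F (~: A)) && (v \in Delta F (~: B))) ->
  nonzeros u v f = w1.
Proof.
move=> uvN; have uv_equid : equidistributed (setX (Delta F A) (Delta F B))
    (fun p => dotF u p.1 + dotF v p.2).
  by case/nandP: uvN => /equid_dotF eqd; [apply: equid_setXl | apply: equid_setXr].
have := equid_card_nz (equid_setXl (Deltac F C) (dotF f) uv_equid).
by rewrite -S1E -w1_card_S1 => /eqP; rewrite eqn_pmul2l ?q_gt0 // => /eqP <-.
Qed.

Definition fweight (f : 'rV[F]_m) := if f == 0 then 0%N else if f \in Delta F (~: C) then hw4 else w1.

Lemma nonzeros_degen u v f : u \in Delta F (~: A) -> v \in Delta F (~: B) ->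
  nonzeros u v f = fweight f.
Proof.
move=> uA vB; rewrite /nonzeros S1E /lform.
rewrite (card_setX_nz_addl0 (g := fun p => dotF u p.1 + dotF v p.2) (Deltac F C) (dotF f)); last first.
  by move=> [x y] /setXP[xA yB]; rewrite (dotF_Delta_compl uA xA) (dotF_Delta_compl vB yB) addr0.
rewrite cardsX !card_Delta /fweight; case: eqP => [-> | /eqP f0].
  by rewrite card_setI_sum big1 ?muln0 // => w _; rewrite dot0F eqxx.
apply/eqP; rewrite -(eqn_pmul2l q_gt0) mulnCA card_Deltac_dotF_nz //.
by case: ifP => _; rewrite ?hw4E ?w1_card_S1 ?card_S1 ?subn0 -?mulnBr; apply/eqP; ring.
Qed.

(* [degen1 r] ([degen2 r]): the form counted by the first (second) Gray half of [grayCW r]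
   does not depend on the Δ_A × Δ_B component of s. *)
Definition degen1 (r : RM) := (r.1.2 \in Delta F (~: A)) && (r.1.1 \in Delta F (~: B)).
Definition degen2 (r : RM) := (r.1.1 + r.1.2 \in Delta F (~: A)) && (r.1.1 \in Delta F (~: B)).
Definition nz_off_C (f : 'rV[F]_m) := (f != 0) && (f \in Delta F (~: C)).
Definition half_weight (z : bool) f := if z then fweight f else w1.

Lemma wtH_grayCWE r :
  wtH (grayCW r) = (half_weight (degen1 r) r.2 + half_weight (degen2 r) r.2)%N.
Proof.
rewrite wtH_grayCW /half_weight /degen1 /degen2.
by congr (_ + _)%N; case: ifP => [/andP[]|/negbT]; by [apply: nonzeros_degen | apply: nonzeros_equid].
Qed.

Local Ltac weight_cases r :=
  rewrite wtH_grayCWE /half_weight /fweight; move: w1_gt0 w1_lt_hw4;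
  rewrite /nz_off_C; case: (degen1 r) (degen2 r) (r.2 == 0) (r.2 \in Delta F (~: C)) => [] [] [] [];
  rewrite /= ?inE; move: w1 hw4 => x y; lia.

Lemma wtH_grayCW_cases r : wtH (grayCW r) \in [:: 0; w1; 2 * w1; w1 + hw4; 2 * hw4]%N.
Proof. weight_cases r. Qed.

Lemma wtH_grayCW_eq0 r : (wtH (grayCW r) == 0%N) = [&& degen1 r, degen2 r & r.2 == 0].
Proof. weight_cases r. Qed.

Lemma wtH_grayCW_eq_w1 r : (wtH (grayCW r) == w1) = (degen1 r != degen2 r) && (r.2 == 0).
Proof. weight_cases r. Qed.

Lemma wtH_grayCW_eq_w3 r : (wtH (grayCW r) == w1 + hw4)%N =
  (degen1 r != degen2 r) && nz_off_C r.2.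
Proof. weight_cases r. Qed.

Lemma wtH_grayCW_eq_w4 r : (wtH (grayCW r) == 2 * hw4)%N =
  [&& degen1 r, degen2 r & nz_off_C r.2].
Proof. weight_cases r. Qed.

Lemma wtH_grayCW_w2 r : degen1 r -> degen2 r -> r.2 \notin Delta F (~: C) ->
  wtH (grayCW r) = (2 * w1)%N.
Proof.
move=> d1 d2 rC; rewrite wtH_grayCWE /half_weight /fweight d1 d2 (negbTE rC).
case: eqP => [r0 | _]; last by rewrite addnn mul2n.
by rewrite r0 Delta0 in rC.
Qed.

Lemma card_triple (Xd Xe Xf : {set 'rV[F]_m}) :
  #|[set r : RM | [&& r.1.1 \in Xd, r.1.2 \in Xe & r.2 \in Xf]]| = (#|Xd| * #|Xe| * #|Xf|)%N.
Proof. by rewrite -!cardsX; apply: eq_card => -[[d e] f]; rewrite !inE /= andbA. Qed.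

Lemma degen12 r : degen1 r && degen2 r =
  (r.1.1 \in Delta F (~: (A :|: B))) && (r.1.2 \in Delta F (~: A)).
Proof.
rewrite /degen1 /degen2 setCU DeltaI.
have [eA|] := boolP (r.1.2 \in Delta F (~: A)); last by rewrite !andbF.
by rewrite DeltaDr //; case: (_ \in Delta F (~: A)); case: (_ \in Delta F (~: B)).
Qed.

Lemma degen1_not2 r : degen1 r && ~~ degen2 r =
  (r.1.1 \in Delta F (~: B) :\: Delta F (~: (A :|: B))) && (r.1.2 \in Delta F (~: A)).
Proof.
rewrite /degen1 /degen2 in_setD setCU DeltaI.
have [eA|] := boolP (r.1.2 \in Delta F (~: A)); last by rewrite !andbF.
by rewrite DeltaDr //; case: (_ \in Delta F (~: A)); case: (_ \in Delta F (~: B)).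
Qed.

Definition swap_degen (r : RM) : RM := ((- r.1.1, r.1.1 + r.1.2), r.2).

Lemma swap_degenK : involutive swap_degen.
Proof. by move=> [[d e] f]; rewrite /swap_degen /= opprK addKr. Qed.

Lemma degen1_swap r : degen1 (swap_degen r) = degen2 r.
Proof. by rewrite /degen1 /degen2 /= DeltaN. Qed.

Lemma degen2_swap r : degen2 (swap_degen r) = degen1 r.
Proof. by rewrite /degen1 /degen2 /= DeltaN addKr. Qed.

Lemma card_degen12 (p : pred 'rV[F]_m) :
  #|[set r : RM | degen1 r && degen2 r && p r.2]| = (q ^ (m - ab) * q ^ (m - a) * #|[set f | p f]|)%N.
Proof.
rewrite -!card_Delta_compl -card_triple.
by apply: eq_card => r; rewrite !inE degen12 !inE andbA.
Qed.

Lemma card_degen_xor (p : pred 'rV[F]_m) :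
  #|[set r : RM | (degen1 r != degen2 r) && p r.2]| =
  (2 * ((q ^ (m - b) - q ^ (m - ab)) * q ^ (m - a) * #|[set f | p f]|))%N.
Proof.
have card_1not2 : #|[set r : RM | degen1 r && ~~ degen2 r && p r.2]| =
    ((q ^ (m - b) - q ^ (m - ab)) * q ^ (m - a) * #|[set f | p f]|)%N.
  rewrite -!card_Delta_compl -cardsDS -?card_triple.
    by apply: eq_card => r; rewrite !inE degen1_not2 !inE andbA.
  by apply/subsetP => v; rewrite setCU DeltaI => /andP[].
have card_2not1 : #|[set r : RM | degen2 r && ~~ degen1 r && p r.2]| =
    #|[set r : RM | degen1 r && ~~ degen2 r && p r.2]|.
  rewrite -(card_imset _ (inv_inj swap_degenK)); apply: eq_card => r.
  rewrite -[r in LHS]swap_degenK mem_imset; last exact: inv_inj swap_degenK.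
  by rewrite !inE degen1_swap degen2_swap.
rewrite -card_1not2 mul2n -addnn -{2}card_2not1 !card_set_sum -big_split /=.
by apply: eq_bigr => r _; case: (degen1 r); case: (degen2 r); case: (p r.2).
Qed.

Lemma card_set_eq0 : #|[set f : 'rV[F]_m | f == 0]| = 1%N.
Proof. by rewrite -[RHS](cards1 (0 : 'rV[F]_m)); apply: eq_card => f; rewrite !inE. Qed.

Lemma card_ker_grayCW : #|[set r : RM | grayCW r == 0]| = (q ^ (m - ab) * q ^ (m - a))%N.
Proof.
have := card_degen12 (eq_op^~ 0); rewrite card_set_eq0 muln1 => <-.
by apply: eq_card => r; rewrite !inE -wtH_eq0 wtH_grayCW_eq0 andbA.
Qed.

Lemma card_grayCW_fiber r :
  #|[set r' : RM | grayCW r' == grayCW r]| = (q ^ (m - ab) * q ^ (m - a))%N.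
Proof.
rewrite -card_ker_grayCW -(card_imset [set r0 : RM | grayCW r0 == 0] (addIr r)).
apply: eq_card => r'; rewrite -[r' in RHS](subrK r) (mem_imset _ _ (addIr r)).
by rewrite !inE raddfB subr_eq0.
Qed.

Lemma freq_grayCode w :
  (freq Cd w * (q ^ (m - ab) * q ^ (m - a)))%N = #|[set r : RM | wtH (grayCW r) == w]|.
Proof. by rewrite (card_preim_const_fibers (fun x => wtH x == w) card_grayCW_fiber). Qed.

Lemma ker_grayCW_gt0 : (0 < q ^ (m - ab) * q ^ (m - a))%N.
Proof. by rewrite muln_gt0 !expn_gt0 q_gt0. Qed.

Lemma card_grayCode : #|Cd| = (q ^ (m + a + ab))%N.
Proof.
apply/eqP; rewrite -(eqn_pmul2r ker_grayCW_gt0).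
have := card_preim_const_fibers predT card_grayCW_fiber.
rewrite cardsT (_ : [set v in _ | predT v] = Cd) => [<-|]; last by apply/setP => v; rewrite !inE andbT.
rewrite !card_prod card_mx mul1n -!expnD; apply/eqP; congr (_ ^ _)%N.
have := max_card (A :|: B); have := max_card A; rewrite card_ord; lia.
Qed.

Lemma grayCode_dim : code_dim Cd = (m + a + ab)%N.
Proof.
apply/eqP; rewrite -(eqn_exp2l _ _ (finNzRing_gt1 F)) -card_linear_code ?card_grayCode //.
exact: grayCode_linear.
Qed.

Lemma powq_mb_sub : (q ^ (m - b) - q ^ (m - ab) = (q ^ (ab - b) - 1) * q ^ (m - ab))%N.
Proof.
rewrite mulnBl mul1n -expnD; congr (_ ^ _ - _)%N.
have := subset_leq_card (subsetUr A B); have := max_card (A :|: B); rewrite card_ord; lia.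
Qed.

Lemma card_nz_off_C : #|[set f | nz_off_C f]| = (q ^ (m - c) - 1)%N.
Proof.
rewrite -card_Delta_compl (cardsD1 0 (Delta F (~: C))) Delta0 add1n subSS subn0.
by apply: eq_card => f; rewrite /nz_off_C !inE.
Qed.

Lemma freq_w1 : freq Cd w1 = (2 * (q ^ (ab - b) - 1))%N.
Proof.
apply/eqP; rewrite -(eqn_pmul2r ker_grayCW_gt0) freq_grayCode.
rewrite (_ : [set r : RM | _] = [set r : RM | (degen1 r != degen2 r) && (r.2 == 0)]); last first.
  by apply/setP => r; rewrite !inE wtH_grayCW_eq_w1.
by rewrite (card_degen_xor (eq_op^~ 0)) card_set_eq0 powq_mb_sub; apply/eqP; ring.
Qed.

Lemma freq_w3 : freq Cd (w1 + hw4) = (2 * (q ^ (ab - b) - 1) * (q ^ (m - c) - 1))%N.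
Proof.
apply/eqP; rewrite -(eqn_pmul2r ker_grayCW_gt0) freq_grayCode.
rewrite (_ : [set r : RM | _] = [set r : RM | (degen1 r != degen2 r) && nz_off_C r.2]); last first.
  by apply/setP => r; rewrite !inE wtH_grayCW_eq_w3.
by rewrite card_degen_xor card_nz_off_C powq_mb_sub; apply/eqP; ring.
Qed.

Lemma freq_w4 : freq Cd (2 * hw4) = (q ^ (m - c) - 1)%N.
Proof.
apply/eqP; rewrite -(eqn_pmul2r ker_grayCW_gt0) freq_grayCode.
rewrite (_ : [set r : RM | _] = [set r : RM | degen1 r && degen2 r && nz_off_C r.2]); last first.
  by apply/setP => r; rewrite !inE wtH_grayCW_eq_w4 andbA.
by rewrite card_degen12 card_nz_off_C; apply/eqP; ring.
Qed.

Lemma freq_0 : freq Cd 0 = 1%N.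
Proof.
rewrite /freq -[RHS](cards1 (0 : 'rV[F]_(#|S| + #|S|))); apply: eq_card => w.
rewrite !inE wtH_eq0; case: eqP => [->|]; rewrite ?andbF // andbT.
by rewrite -(raddf0 grayCW) grayCW_in.
Qed.

Lemma grayCode_weights w : w \in Cd -> wtH w \in [:: 0; w1; 2 * w1; w1 + hw4; 2 * hw4]%N.
Proof. by case/grayCodeP => r ->; apply: wtH_grayCW_cases. Qed.

Lemma card_grayCode_freq : #|Cd| =
  (freq Cd 0 + freq Cd w1 + freq Cd (2 * w1) + freq Cd (w1 + hw4) + freq Cd (2 * hw4))%N.
Proof.
rewrite /freq !card_setI_sum -!big_split -sum1_card /=; apply: eq_bigr => w /grayCode_weights.
by rewrite !inE; move: (wtH w) w1_gt0 w1_lt_hw4; move: w1 hw4 => x y z; lia.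
Qed.

Lemma freq_w2 : freq Cd (2 * w1) = (q ^ (m + a + ab) + q ^ (m - c) - 2 * q ^ (m - c + ab - b))%N.
Proof.
have total := card_grayCode_freq.
rewrite freq_0 freq_w1 freq_w3 freq_w4 card_grayCode in total.
have -> : (m - c + ab - b = (m - c) + (ab - b))%N.
  by have := subset_leq_card (subsetUr A B); lia.
rewrite (expnD q (m - c) (ab - b)) {}total.
have := expn_gt0 q (ab - b); have := expn_gt0 q (m - c); rewrite q_gt0 /=.
case: (q ^ (m - c))%N => // X _; case: (q ^ (ab - b))%N => // Y _; rewrite !subn1 /=.
rewrite (_ : (X.+1 * Y.+1 = X * Y + X + Y + 1)%N); last by ring.
rewrite (_ : (2 * Y * X = 2 * (X * Y))%N); last by ring.
by move: (X * Y)%N => P; lia.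
Qed.

Lemma grayCode_nz_weights x : x \in Cd -> x != 0 ->
  wtH x \in [:: w1; 2 * w1; w1 + hw4; 2 * hw4]%N.
Proof.
move=> xC; rewrite -wtH_eq0; have := grayCode_weights xC.
by rewrite !inE; move: (wtH x) w1_gt0 w1_lt_hw4; move: w1 hw4 => u v z; lia.
Qed.

Hypothesis AB : ~~ (A \subset B).

Lemma grayCode_weights_attained w : w \in [:: w1; 2 * w1; w1 + hw4; 2 * hw4]%N ->
  exists2 x, x \in Cd & wtH x = w.
Proof.
have [i iA iB] := subsetPn AB; have [j jC] := set0Pn C Cn.
have [k kC] : exists k, k \notin C.
  apply/existsP; rewrite -negb_forall; apply: contraTN Cm => /forallP allC.
  by rewrite -leqNgt -[X in (X <= _)%N]card_ord subset_leq_card //; apply/subsetP => k _; apply: allC.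
have di_B : delta_mx 0 i \in Delta F (~: B) by rewrite Delta_delta inE iB.
have di_A : delta_mx 0 i \notin Delta F (~: A) by rewrite Delta_delta inE iA.
have dk_C : nz_off_C (delta_mx 0 k).
  rewrite /nz_off_C Delta_delta inE kC andbT; apply/eqP => /rowP /(_ k) /eqP.
  by rewrite !mxE !eqxx oner_eq0.
have dj_C : delta_mx 0 j \notin Delta F (~: C) by rewrite Delta_delta inE jC.
rewrite !inE => /or4P[] /eqP ->.
- exists (grayCW ((delta_mx 0 i, 0), 0)); rewrite ?grayCW_in //; apply/eqP.
  by rewrite wtH_grayCW_eq_w1 /degen1 /degen2 /= addr0 Delta0 di_B (negbTE di_A) eqxx.
- exists (grayCW ((0, 0), delta_mx 0 j)); rewrite ?grayCW_in //.
  by apply: wtH_grayCW_w2; rewrite /degen1 /degen2 /= ?addr0 ?Delta0.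
- exists (grayCW ((delta_mx 0 i, 0), delta_mx 0 k)); rewrite ?grayCW_in //; apply/eqP.
  by rewrite wtH_grayCW_eq_w3 /degen1 /degen2 /= addr0 Delta0 di_B (negbTE di_A).
- exists (grayCW ((0, 0), delta_mx 0 k)); rewrite ?grayCW_in //; apply/eqP.
  by rewrite wtH_grayCW_eq_w4 /degen1 /degen2 /= addr0 !Delta0.
Qed.

Lemma grayCode_min_dist : min_dist_is Cd w1.
Proof.
split=> [|_ _ /grayCodeP[r ->] /grayCodeP[r' ->] rr'].
  have [x xC wx] := @grayCode_weights_attained w1 (mem_head _ _).
  exists x => //; exists 0; first by rewrite -(raddf0 grayCW) grayCW_in.
  by rewrite subr0 -wtH_eq0 wx eqn0Ngt w1_gt0.
have := grayCode_nz_weights (grayCW_in (r - r')).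
rewrite raddfB subr_eq0 => /(_ rr'); rewrite !inE.
by move: (wtH _) w1_lt_hw4; move: w1 hw4 => u v z; lia.
Qed.

Lemma grayCode_nz_weights_perm : perm_eq (nz_weights Cd) [:: w1; 2 * w1; w1 + hw4; 2 * hw4]%N.
Proof.
apply: uniq_perm; first exact: undup_uniq.
  by rewrite /= !inE; move: w1_gt0 w1_lt_hw4; move: w1 hw4 => u v; lia.
move=> w; rewrite mem_undup; apply/mapP/idP => [[x] | wL].
  by rewrite mem_filter => /andP[x0 /[!mem_enum] xC] ->; apply: grayCode_nz_weights.
have [x xC xw] := grayCode_weights_attained wL; exists x => //.
rewrite mem_filter mem_enum xC andbT -wtH_eq0 xw; move: wL; rewrite !inE.
by move: w1_gt0 w1_lt_hw4; move: w1 hw4 => u v; lia.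
Qed.

End GrayImage.

Theorem mainTheorem5 (F : finFieldType) (m : nat) (A B C : {set 'I_m}) :
  (2 <= m)%N -> A != set0 -> B != set0 -> C != set0 ->
  (#|C| < m)%N -> ~~ (A \subset B) ->
  let q := #|F| in
  let a := #|A| in let b := #|B| in let c := #|C| in let ab := #|A :|: B| in
  let Cd := grayCode (S1 F A B C) in
  let w1 := ((q - 1) * q ^ (a + b - 1) * (q ^ m - q ^ c))%N in
  let w2 := (2 * ((q - 1) * q ^ (a + b - 1) * (q ^ m - q ^ c)))%N in
  let w3 := ((q - 1) * q ^ (a + b - 1) * (2 * q ^ m - q ^ c))%N in
  let w4 := (2 * (q - 1) * q ^ (m + a + b - 1))%N in
  [/\ (#|S1 F A B C| + #|S1 F A B C| = 2 * q ^ (a + b) * (q ^ m - q ^ c))%N,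
      is_linear_code Cd,
      code_dim Cd = (m + a + ab)%N,
      min_dist_is Cd w1 &
    [/\ size (nz_weights Cd) = 4%N,
      (forall x, x \in Cd -> x != 0 -> wtH x \in [:: w1; w2; w3; w4]),
      [/\ freq Cd w1 = (2 * (q ^ (ab - b) - 1))%N,
          freq Cd w2 = (q ^ (m + a + ab) + q ^ (m - c) - 2 * q ^ (m - c + ab - b))%N,
          freq Cd w3 = (2 * (q ^ (ab - b) - 1) * (q ^ (m - c) - 1))%N &
          freq Cd w4 = (q ^ (m - c) - 1)%N] &
      ((q = 2)%N \/ (q = 3)%N -> self_orthogonal Cd)]].
Proof.
move=> _ An Bn Cn Cm AB q a b c ab Cd w1 w2 w3 w4.
have w3E : w3 = (w1 + hw4 F A B)%N by exact: w1_add_hw4.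
have w4E : w4 = (2 * hw4 F A B)%N by rewrite /w4 /hw4 mulnA.
split.
- by rewrite card_S1 expnD; ring.
- exact: grayCode_linear.
- exact: grayCode_dim.
- exact: grayCode_min_dist.
split.
- by rewrite (perm_size (grayCode_nz_weights_perm F An Bn Cn Cm AB)).
- by move=> x xC x0; rewrite w3E w4E; apply: grayCode_nz_weights.
- split; [exact: freq_w1 | exact: freq_w2 | rewrite w3E; exact: freq_w3 | rewrite w4E; exact: freq_w4].
(* The Gray inner product vanishes for every q, not only for q = 2, 3. *)
- by move=> _; apply: grayCode_self_orthogonal.
Qed.
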